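(* Let $G$ be a finite solvable group with $\mathcal{I}(G)\neq G$. Then $\Sigma(G)\neq\emptyset$, i.e. $G$ contains an element whose order is divisible by at least two distinct primes.
   Context: For a finite group $G$, let $\widetilde{\Gamma}(G)$ be the graph with vertex set $G$ in which two distinct elements $x,y$ are adjacent if and only if $|\langle x,y\rangle|$ is divisible by at least three distinct primes. $\mathcal{I}(G)$ denotes the set of isolated vertices of $\widetilde{\Gamma}(G)$. $\Sigma(G)$ denotes the set of elements $g\in G$ whose order is divisible by at least two distinct primes. *)

From mathcomp Require Import all_boot all_fingroup all_solvable.
Set Implicit Arguments. Unset Strict Implicit. Unset Printing Implicit Defensive.
Local Open Scope group_scope.

Definition tadj (gT : finGroupType) (x y : gT) : bool :=
  (x != y) && (2 < size (primes #|<<[set x; y]>>|))%N.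

Definition isolated_set (gT : finGroupType) (G : {group gT}) : {set gT} :=
  [set x in G | [forall y in G, ~~ tadj x y]].

Definition Sigma (gT : finGroupType) (G : {group gT}) : {set gT} :=
  [set g in G | (1 < size (primes #[g]))%N].

From mathcomp Require Import all_boot all_fingroup all_solvable.
From mathcomp Require Import all_algebra mxrepresentation mxabelem.
Set Implicit Arguments. Unset Strict Implicit. Unset Printing Implicit Defensive.
Import GRing.Theory.
Local Open Scope group_scope.

(* If Sigma(G) is empty, every element of G has prime power order; this passes
   to subgroups, so it suffices that such a solvable group H has at most two
   prime divisors, for then no <<x, y>> has three.  A minimal normal subgroup N
   of H is an elementary abelian p-group, and a Hall p'-subgroup L of H acts on
   N fixed-point-freely, since commuting nontrivial elements of coprime orders
   would multiply to an element of mixed order.  If L had two prime divisors, a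
   minimal normal s-subgroup M of L and an element y of prime order r <> s
   would form a Frobenius group M<y>.  In the F_p-module N, the sum of u.z over
   a nontrivial subgroup of L is a fixed vector, hence 0.  Now compute
   sum_(a in M) sum_(c in <y>) u.(c^a): the inner sums run over the conjugates
   of <y> and vanish; but for c <> 1 the class c^M is the coset Mc, so summing
   over a first leaves |M| u, forcing u = 0 as p does not divide |M|. *)

Lemma size_primes_partC (p n : nat) :
  (size (primes n) <= (size (primes n`_p^')).+1)%N.
Proof.
rewrite primes_part size_filter -(count_predC (mem p^')) -addn1 leq_add2l.
rewrite (@eq_count _ _ (pred1 p)) => [|q]; last by rewrite /= !inE negbK.
by rewrite count_uniq_mem ?primes_uniq ?leq_b1.
Qed.

Section ElementOrders.

Variable gT : finGroupType.
Implicit Types (A : {group gT}) (x y c : gT).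

Lemma primes_order_mul_coprime x y :
  commute x y -> coprime #[x] #[y] -> x != 1 -> y != 1 ->
  (1 < size (primes #[x * y]))%N.
Proof.
move=> cxy coxy ntx nty; rewrite orderM //.
have [px py] : prime (pdiv #[x]) /\ prime (pdiv #[y]).
  by rewrite !pdiv_prime ?order_gt1.
apply: (@uniq_leq_size _ [:: pdiv #[x]; pdiv #[y]]).
  rewrite /= inE andbT; apply: contraTneq coxy => eq_pdiv.
  apply/negP=> /(coprime_dvdl (pdiv_dvd _))/(coprime_dvdr (pdiv_dvd _)).
  by rewrite eq_pdiv prime_coprime // dvdnn.
move=> q; rewrite !inE primesM ?order_gt0 //.
by case/orP=> /eqP->; rewrite !mem_primes ?px ?py !order_gt0 !pdiv_dvd ?orbT.
Qed.

Lemma class_regular_rcoset A c :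
  c \in 'N(A) -> 'C_A[c] = 1 -> c ^: A = A :* c.
Proof.
move=> nAc regAc; apply/eqP.
rewrite eqEcard card_rcoset -index_cent1 regAc indexg1 leqnn andbT.
apply/subsetP=> _ /imsetP[a aA ->]; rewrite mem_rcoset.
have -> : c ^ a * c^-1 = a^-1 * a ^ c^-1 by rewrite !conjgE invgK !mulgA.
by rewrite groupM ?groupV // memJ_norm ?groupV.
Qed.

End ElementOrders.

Section FixedPointFreeAction.

Variables (gT : finGroupType) (p : nat) (E L : {group gT}).
Hypotheses (abelE : p.-abelem E) (ntE : E :!=: 1) (nEL : L \subset 'N(E)).
Hypothesis fpfL : {in L^#, forall g, 'C_E[g] = 1}.

Local Notation rG := (abelem_repr abelE ntE nEL).

Lemma fixedpointfree_sum_eq0 (B : {group gT}) (u : 'rV(E)) :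
  B \subset L -> B :!=: 1 -> (\sum_(b in B) u *m rG b = 0)%R.
Proof.
move=> sBL /trivgPn[c cB ntc]; set w := (\sum_(b in B) _)%R.
have cL := subsetP sBL c cB.
have wc : (w *m rG c = w)%R.
  rewrite {2}/w (reindex_astabs 'R c) ?astabsR //= mulmx_suml.
  by apply: eq_bigr => b bB; rewrite repr_mxM ?(subsetP sBL) // mulmxA.
have : rVabelem abelE ntE w \in 'C_E[c].
  rewrite inE mem_rVabelem; apply/cent1P/commgP/conjg_fixP.
  by rewrite -(rVabelemJ _ _ nEL) // wc.
rewrite fpfL => [/set1P w1|]; last by rewrite !inE ntc.
by rewrite -(rVabelemK abelE ntE w) w1 abelem_rV_1.
Qed.

Lemma fixedpointfree_no_Frobenius (A : {group gT}) (y : gT) :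
  A \subset L -> A :!=: 1 -> p^'.-group A ->
  y \in L -> y != 1 -> y \in 'N(A) -> {in <[y]>^#, forall c, 'C_A[c] = 1} ->
  False.
Proof.
move=> sAL ntA p'A yL nty nAy regAy.
have [pr_p _ _] := pgroup_pdiv (abelem_pgroup abelE) ntE.
have {}p'A : ~~ (p %| #|A|)%N by rewrite -p'natE.
have /trivgPn[x xE ntx] := ntE; set u := abelem_rV abelE ntE x.
have sYL : <[y]> \subset L by rewrite cycle_subG.
pose F z := (u *m rG z)%R.
have sum_conjg a : a \in A -> (\sum_(c in <[y]>) F (c ^ a)%g = 0)%R.
  move=> aA; rewrite -(big_imset _ (in2W (fingroup.conjg_inj a))) /=.
  rewrite -[imset _ _]/(<[y]> :^ a).
  apply: (@fixedpointfree_sum_eq0 (<[y]> :^ a)%G).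
    by rewrite conj_subG ?(subsetP sAL).
  by rewrite conjsg_eq1 cycle_eq1.
have sum_class c : c \in <[y]>^# -> (\sum_(a in A) F (c ^ a)%g = 0)%R.
  move=> Yc; have /setD1P[ntc cY] := Yc; have cL := subsetP sYL c cY.
  have nAc : c \in 'N(A) by move: cY; apply/subsetP; rewrite cycle_subG.
  have cA : c ^: A = A :* c by rewrite class_regular_rcoset ?regAy.
  have injA : {in A &, injective (conjg c)}.
    by apply/imset_injP; rewrite -[imset _ _]/(c ^: A) cA card_rcoset.
  rewrite -(big_imset _ injA) /= -[imset _ _]/(c ^: A) cA.
  rewrite -rcosetE (big_imset _ (in2W (mulIg c))) /= /F.
  rewrite (eq_bigr (fun b => u *m rG b *m rG c)%R) => [|b bA]; last first.
    by rewrite repr_mxM ?(subsetP sAL b bA) ?mulmxA.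
  by rewrite -mulmx_suml fixedpointfree_sum_eq0 ?mul0mx.
have : (u *+ #|A| = 0)%R.
  transitivity (\sum_(a in A) \sum_(c in <[y]>) F (c ^ a)%g)%R; last first.
    by rewrite big1.
  rewrite exchange_big (bigD1 1) //= [X in (_ + X)%R]big1 => [|c /andP[cY ntc]].
    rewrite addr0 -sumr_const; apply: eq_bigr => a _.
    by rewrite /F conj1g repr_mx1 mulmx1.
  by apply: sum_class; rewrite !inE ntc.
move/eqP; rewrite -scaler_nat scaler_eq0 -(dvdn_pcharf (pchar_Fp pr_p)).
rewrite (negPf p'A) /= -(abelem_rV_1 abelE ntE).
by rewrite (inj_in_eq (@abelem_rV_inj _ _ _ abelE ntE)) ?group1 // (negPf ntx).
Qed.

End FixedPointFreeAction.

Section PrimePowerOrderElements.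

Variable gT : finGroupType.
Implicit Types (A H K : {group gT}) (g : gT).

Definition eppo (A : {set gT}) := {in A, forall g, (size (primes #[g]) <= 1)%N}.

Lemma eppoS H K : K \subset H -> eppo H -> eppo K.
Proof. by move=> sKH eppoH g /(subsetP sKH); apply: eppoH. Qed.

Lemma eppo_cent1_coprime H A g :
  eppo H -> A \subset H -> g \in H -> g != 1 -> coprime #|A| #[g] ->
  'C_A[g] = 1.
Proof.
move=> eppoH sAH gH ntg coAg; apply/trivgP/subsetP=> a /setIP[aA /cent1P cag].
rewrite inE; apply: contraLR (eppoH _ (groupM (subsetP sAH a aA) gH)) => nta.
rewrite -ltnNge primes_order_mul_coprime //.
exact: coprime_dvdl (order_dvdG aA) coAg.
Qed.

Lemma eppo_fixedpointfree_primes_le1 p (N L : {group gT}) :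
  solvable L -> eppo L -> p.-abelem N -> N :!=: 1 -> L \subset 'N(N) ->
  p^'.-group L -> {in L^#, forall g, 'C_N[g] = 1} ->
  (size (primes #|L|) <= 1)%N.
Proof.
move=> solL eppoL abelN ntN nNL p'L fpfL.
have [-> | ntL] := eqVneq (L : {set gT}) 1; first by rewrite cards1.
have [M minM sML] := minnormal_exists ntL (normG L).
have [nML ntM /is_abelemP[s _ /abelem_pgroup sM]] :=
  minnormal_solvable minM sML solL.
rewrite leqNgt; apply/negP=> two_primes.
have [r Lr rs] : exists2 r, r \in primes #|L| & r != s.
  apply/hasP; apply: contraTT two_primes => /hasPn only_s; rewrite -leqNgt.
  apply: (@uniq_leq_size _ _ [:: s]) => [|q /only_s]; first exact: primes_uniq.
  by rewrite inE negbK.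
move: Lr; rewrite mem_primes => /and3P[pr_r _ r_dv_L].
have [y yL oy] := Cauchy pr_r r_dv_L.
have s'Y : s^'.-group <[y]> by rewrite /pgroup -orderE oy pnatE // !inE.
apply: (fixedpointfree_no_Frobenius abelN ntN nNL fpfL sML ntM _ yL _).
- exact: pgroupS sML p'L.
- by rewrite -order_gt1 oy prime_gt1.
- exact: subsetP nML y yL.
move=> c /setD1P[ntc cY]; apply: eppo_cent1_coprime eppoL sML _ ntc _.
  by move: cY; apply/subsetP; rewrite cycle_subG.
exact: pnat_coprime sM (mem_p_elt s'Y cY).
Qed.

Lemma eppo_solvable_primes_le2 H :
  solvable H -> eppo H -> (size (primes #|H|) <= 2)%N.
Proof.
move=> solH eppoH; have [-> | ntH] := eqVneq (H : {set gT}) 1.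
  by rewrite cards1.
have [N minN sNH] := minnormal_exists ntH (normG H).
have [nNH ntN /is_abelemP[p _ abelN]] := minnormal_solvable minN sNH solH.
have [L hallL] := Hall_exists p^' solH; have [sLH p'L _] := and3P hallL.
have fpfL : {in L^#, forall g, 'C_N[g] = 1}.
  move=> g /setD1P[ntg gL].
  apply: eppo_cent1_coprime eppoH sNH (subsetP sLH g gL) ntg _.
  exact: pnat_coprime (abelem_pgroup abelN) (mem_p_elt p'L gL).
apply: leq_trans (size_primes_partC p #|H|) _; rewrite -(card_Hall hallL) ltnS.
apply: eppo_fixedpointfree_primes_le1 abelN ntN _ p'L fpfL.
- exact: solvableS sLH solH.
- exact: eppoS sLH eppoH.
exact: subset_trans sLH nNH.
Qed.

End PrimePowerOrderElements.

Theorem corollary2p2 (gT : finGroupType) (G : {group gT}) :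
  solvable G -> isolated_set G != G :> {set gT} -> Sigma G != set0.
Proof.
move=> solG; apply: contra_neq => Sigma0.
have eppoG : eppo G.
  move=> g gG; rewrite leqNgt; apply/negP=> mixed.
  by have := in_set0 g; rewrite -Sigma0 inE gG mixed.
apply/setP=> x; rewrite inE andb_idr // => xG.
apply/forall_inP=> y yG; rewrite negb_and -leqNgt; apply/orP; right.
have sXYG : <<[set x; y]>> \subset G by rewrite gen_subG subUset !sub1set xG.
exact: eppo_solvable_primes_le2 (solvableS sXYG solG) (eppoS sXYG eppoG).
Qed.
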